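(* Let $\mathsf{F}(X)=X+(X\times X)$ and $\mathsf{B}(X)=\mathcal{P}(X)$ be the interaction and observation functors. Then $\mathsf{F}$ and $\mathsf{B}$ preserve monomorphisms whose domain is the empty set, and $\mathsf{F}$ preserves wide (small) pushouts of epimorphisms. Consequently $\mathit{Dialg}(\mathsf{F},\mathsf{B})$ has (unique up to isomorphism) factorisations of every homomorphism into a homomorphism with surjective underlying function followed by one with injective underlying function, and every $(\mathsf{F},\mathsf{B})$-dialgebra has a bisimilarity quotient.
   Context: For functors $\mathsf{F},\mathsf{B}:\mathbf{Set}\to\mathbf{Set}$, an $(\mathsf{F},\mathsf{B})$-dialgebra is a pair $(X,f)$ with $X$ a set and $f:\mathsf{F}X\to\mathsf{B}X$ a function; a homomorphism $h:(X,f)\to(Y,g)$ is a function $h:X\to Y$ with $g\circ\mathsf{F}h=\mathsf{B}h\circ f$; these form $\mathit{Dialg}(\mathsf{F},\mathsf{B})$. The interaction functor is $\mathsf{F}(X)=X+(X\times X)$ with $\mathsf{F}h(x)=h(x)$ on the left summand and $\mathsf{F}h(x,y)=(h(x),h(y))$ on the right summand; the observation functor is the covariant powerset $\mathsf{B}(X)=\mathcal{P}(X)$ with $\mathsf{B}h(S)=h[S]$. A quotient of an object $A$ in a category is a chosen representative of an equivalence class of epimorphisms out of $A$ modulo postcomposition with isomorphisms. The bisimilarity quotient of $(X,f)$ is the wide pushout in $\mathit{Dialg}(\mathsf{F},\mathsf{B})$ (if it exists) of the family of all quotients of $(X,f)$. *)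

From Stdlib Require Import ClassicalEpsilon FunctionalExtensionality PropExtensionality.

Definition F (X : Type) : Type := (X + (X * X))%type.
Definition Fmap {X Y : Type} (h : X -> Y) (u : F X) : F Y :=
  match u with
  | inl x => inl (h x)
  | inr (x, y) => inr (h x, h y)
  end.

Definition B (X : Type) : Type := X -> Prop.
Definition Bmap {X Y : Type} (h : X -> Y) (S : B X) : B Y :=
  fun y => exists x, S x /\ h x = y.

(* Monomorphisms / epimorphisms in Set (categorical definitions,
   morphism equality = pointwise equality). *)
Definition set_mono {X Y : Type} (m : X -> Y) : Prop :=
  forall (Z : Type) (u v : Z -> X),
    (forall z, m (u z) = m (v z)) -> forall z, u z = v z.
Definition set_epi {X Y : Type} (e : X -> Y) : Prop :=
  forall (Z : Type) (u v : Y -> Z),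
    (forall x, u (e x) = v (e x)) -> forall y, u y = v y.

Definition set_cocone {I X : Type} {Y : I -> Type} (e : forall i, X -> Y i)
  (P : Type) (p : X -> P) (c : forall i, Y i -> P) : Prop :=
  forall i x, c i (e i x) = p x.

Definition set_wide_pushout {I X : Type} {Y : I -> Type} (e : forall i, X -> Y i)
  (P : Type) (p : X -> P) (c : forall i, Y i -> P) : Prop :=
  set_cocone e P p c /\
  forall (Q : Type) (q : X -> Q) (d : forall i, Y i -> Q),
    set_cocone e Q q d ->
    exists u : P -> Q,
      (forall x, u (p x) = q x) /\ (forall i y, u (c i y) = d i y) /\
      forall u' : P -> Q,
        (forall x, u' (p x) = q x) -> (forall i y, u' (c i y) = d i y) ->
        forall z, u' z = u z.

Record dialg := Dialg { car : Type; str : F car -> B car }.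

Definition is_hom (D E : dialg) (h : car D -> car E) : Prop :=
  forall u, str E (Fmap h u) = Bmap h (str D u).

Definition hom (D E : dialg) : Type := {h : car D -> car E | is_hom D E h}.
Definition hfun {D E : dialg} (h : hom D E) : car D -> car E := proj1_sig h.

Definition dialg_epi {D E : dialg} (e : hom D E) : Prop :=
  forall (Z : dialg) (u v : hom E Z),
    (forall x, hfun u (hfun e x) = hfun v (hfun e x)) ->
    forall y, hfun u y = hfun v y.

Definition dialg_iso {D E : dialg} (i : hom D E) : Prop :=
  exists j : hom E D,
    (forall x, hfun j (hfun i x) = x) /\ (forall y, hfun i (hfun j y) = y).

Definition dialg_cocone {I : Type} {D : dialg} {Y : I -> dialg}
  (e : forall i, hom D (Y i)) (P : dialg) (p : hom D P) (c : forall i, hom (Y i) P)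
  : Prop :=
  forall i x, hfun (c i) (hfun (e i) x) = hfun p x.

Definition dialg_wide_pushout {I : Type} {D : dialg} {Y : I -> dialg}
  (e : forall i, hom D (Y i)) (P : dialg) (p : hom D P) (c : forall i, hom (Y i) P)
  : Prop :=
  dialg_cocone e P p c /\
  forall (Q : dialg) (q : hom D Q) (d : forall i, hom (Y i) Q),
    dialg_cocone e Q q d ->
    exists u : hom P Q,
      (forall x, hfun u (hfun p x) = hfun q x) /\
      (forall i y, hfun u (hfun (c i) y) = hfun (d i) y) /\
      forall u' : hom P Q,
        (forall x, hfun u' (hfun p x) = hfun q x) ->
        (forall i y, hfun u' (hfun (c i) y) = hfun (d i) y) ->
        forall z, hfun u' z = hfun u z.

Definition epi_out (D : dialg) : Type :=
  {E : dialg & {e : hom D E | dialg_epi e}}.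
Definition epi_tgt {D : dialg} (s : epi_out D) : dialg := projT1 s.
Definition epi_map {D : dialg} (s : epi_out D) : hom D (epi_tgt s) :=
  proj1_sig (projT2 s).

Definition epi_equiv (D : dialg) (s t : epi_out D) : Prop :=
  exists i : hom (epi_tgt s) (epi_tgt t),
    dialg_iso i /\ forall x, hfun i (hfun (epi_map s) x) = hfun (epi_map t) x.

Definition quotient_class (D : dialg) : Type :=
  {C : epi_out D -> Prop | exists r, C r /\ forall s, C s <-> epi_equiv D r s}.

Definition quotient_class_inhabited (D : dialg) (C : quotient_class D) :
  exists s, proj1_sig C s :=
  match proj2_sig C with ex_intro _ r (conj Hr _) => ex_intro _ r Hr end.

(* The quotient = chosen representative of a class *)
Definition quotient_rep (D : dialg) (C : quotient_class D) : epi_out D :=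
  proj1_sig (constructive_indefinite_description _ (quotient_class_inhabited D C)).

Definition is_bisim_quotient (D : dialg) (P : dialg) (p : hom D P)
  (c : forall C : quotient_class D, hom (epi_tgt (quotient_rep D C)) P) : Prop :=
  dialg_wide_pushout (fun C => epi_map (quotient_rep D C)) P p c.

Definition has_bisim_quotient (D : dialg) : Prop :=
  exists (P : dialg) (p : hom D P)
         (c : forall C : quotient_class D, hom (epi_tgt (quotient_rep D C)) P),
    is_bisim_quotient D P p c.

From Stdlib Require Import ClassicalEpsilon FunctionalExtensionality PropExtensionality
  ProofIrrelevance FinFun.

(* The five claims rest on three elementary facts about sets and dialgebras.
   1. Epimorphisms -- of sets, and of (F,B)-dialgebras -- are surjective; for
      dialgebras this is shown by gluing two injections of E into E + E into a
      single dialgebra structure.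
   2. Descent: a homomorphism g out of D that is constant on the fibres of a
      surjective homomorphism e : D -> E factors through e as a homomorphism.
   3. Quotients: for an equivalence relation R on a dialgebra D that is
      compatible with the structure, the set of R-classes carries a dialgebra
      structure making the class map a homomorphism.
   The mono claim is immediate since F and B send the empty set to sets with at
   most one element.  F preserves wide pushouts of surjections because their
   leg from X is surjective, so maps out of F P descend one coordinate at a
   time.  The (surjective, injective) factorisation of h is the quotient by the
   kernel of h, unique up to isomorphism by descent; the bisimilarity quotient
   is the quotient by the equivalence generated by the kernels of all quotients,
   and its universal property is again descent. *)

Lemma pred_ext {X : Type} (S T : X -> Prop) : (forall x, S x <-> T x) -> S = T.
Proof.
  intro H; apply functional_extensionality; intro x; apply propositional_extensionality, H.
Qed.

Lemma Fmap_comp {X Y Z : Type} (f : X -> Y) (g : Y -> Z) (u : F X) :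
  Fmap g (Fmap f u) = Fmap (fun x => g (f x)) u.
Proof. destruct u as [x | [x y]]; reflexivity. Qed.

Lemma Fmap_ext {X Y : Type} (f g : X -> Y) (u : F X) :
  (forall x, f x = g x) -> Fmap f u = Fmap g u.
Proof. intro H; destruct u as [x | [x y]]; simpl; rewrite ?H; reflexivity. Qed.

Lemma Bmap_comp {X Y Z : Type} (f : X -> Y) (g : Y -> Z) (S : B X) :
  Bmap g (Bmap f S) = Bmap (fun x => g (f x)) S.
Proof.
  apply pred_ext; intro z; unfold Bmap; split.
  - intros [y [[x [Hx <-]] <-]]; eauto.
  - intros [x [Hx <-]]; eauto.
Qed.

Lemma Bmap_ext_on {X Y : Type} (f g : X -> Y) (S : B X) :
  (forall x, S x -> f x = g x) -> Bmap f S = Bmap g S.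
Proof.
  intro H; apply pred_ext; intro z; unfold Bmap;
    split; intros [x [Hx <-]]; exists x; rewrite H by exact Hx; auto.
Qed.

Lemma Fmap_surj {X Y : Type} (f : X -> Y) : Surjective f -> Surjective (Fmap f).
Proof.
  intros H [y | [y1 y2]].
  - destruct (H y) as [x <-]; exists (inl x); reflexivity.
  - destruct (H y1) as [x1 <-], (H y2) as [x2 <-]; exists (inr (x1, x2)); reflexivity.
Qed.

Lemma Fmap_inj {X Y : Type} (f : X -> Y) : Injective f -> Injective (Fmap f).
Proof.
  intros H [x | [x1 x2]] [y | [y1 y2]]; simpl; intro E; try discriminate;
    injection E; intros; f_equal; try f_equal; auto.
Qed.

Lemma Bmap_fibres {X Y Z : Type} (g : X -> Y) (f : X -> Z) (S T : B X) :
  (forall x y, g x = g y -> f x = f y) -> Bmap g S = Bmap g T -> Bmap f S = Bmap f T.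
Proof.
  intros Hfib E.
  assert (Half : forall S T, Bmap g S = Bmap g T -> forall z, Bmap f S z -> Bmap f T z).
  { intros S' T' E' z [x [Hx <-]].
    assert (Hgx : Bmap g T' (g x)) by (rewrite <- E'; exists x; auto).
    destruct Hgx as [y [Hy Ey]]; exists y; split; auto. }
  apply pred_ext; intro z; split; apply Half; auto.
Qed.

Definition Flift {X : Type} (R : X -> X -> Prop) (u v : F X) : Prop :=
  match u, v with
  | inl x, inl y => R x y
  | inr (a, b), inr (a', b') => R a a' /\ R b b'
  | _, _ => False
  end.

Lemma Fmap_eq_of_Flift {X Y : Type} (f : X -> Y) (u v : F X) :
  Flift (fun x y => f x = f y) u v -> Fmap f u = Fmap f v.
Proof.
  destruct u as [x | [a b]], v as [y | [a' b']]; simpl; try tauto.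
  - intros ->; reflexivity.
  - intros [-> ->]; reflexivity.
Qed.

Definition preimage {X Y : Type} (f : X -> Y) (Hf : Surjective f) (y : Y) : X :=
  proj1_sig (constructive_indefinite_description _ (Hf y)).

Lemma preimage_spec {X Y : Type} (f : X -> Y) (Hf : Surjective f) (y : Y) :
  f (preimage f Hf y) = y.
Proof. exact (proj2_sig (constructive_indefinite_description _ (Hf y))). Qed.

(* Testing an epimorphism against "is in the image" and "true". *)
Lemma set_epi_surjective {X Y : Type} (e : X -> Y) : set_epi e -> Surjective e.
Proof.
  intros He y.
  assert (Himg : (exists x, e x = y) = True).
  { apply (He Prop (fun y => exists x, e x = y) (fun _ => True)).
    intro x; apply propositional_extensionality; split; eauto. }
  rewrite Himg; exact I.
Qed.

(* Claim 1: both functors send sets with empty domain to sets with at most one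
   element, so every map out of them is mono. *)
Lemma mono_empty_domain_preserved (X Y : Type) (m : X -> Y) :
  (X -> False) -> set_mono m -> set_mono (Fmap m) /\ set_mono (Bmap m).
Proof.
  intros Hempty _; split; intros Z u v _ z.
  - destruct (u z) as [x | [x y]]; destruct (Hempty x).
  - apply functional_extensionality; intro x; destruct (Hempty x).
Qed.

Section WidePushoutOfSurjections.
Variables (I X : Type) (Y : I -> Type) (e : forall i, X -> Y i).
Variables (P : Type) (p : X -> P) (c : forall i, Y i -> P).
Hypothesis e_surj : forall i, Surjective (e i).
Hypothesis pushout : set_wide_pushout e P p c.

(* The leg from X is surjective: "is in the image of p" and "true" are two
   mediating maps into Prop for the same cocone. *)
Lemma wide_pushout_leg_surjective : Surjective p.
Proof.
  destruct pushout as [Hc Hu]; intro z.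
  destruct (Hu Prop (fun _ => True) (fun _ _ => True) (fun _ _ => eq_refl))
    as [u [_ [_ Hunique]]].
  assert (Himg : (exists x, p x = z) = u z).
  { apply (Hunique (fun z => exists x, p x = z)).
    - intro x; apply propositional_extensionality; split; eauto.
    - intros i y; destruct (e_surj i y) as [x <-]; rewrite Hc.
      apply propositional_extensionality; split; eauto. }
  assert (Htrue : True = u z) by (apply (Hunique (fun _ => True)); auto).
  rewrite Himg, <- Htrue; exact Logic.I.
Qed.

Lemma wide_pushout_descend (Q : Type) (g : X -> Q) :
  (forall i a a', e i a = e i a' -> g a = g a') ->
  exists u : P -> Q, forall x, u (p x) = g x.
Proof.
  intro Hfib; destruct pushout as [_ Hu].
  destruct (Hu Q g (fun i y => g (preimage (e i) (e_surj i) y))) as [u [Hup _]].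
  - intros i x; apply (Hfib i), preimage_spec.
  - exists u; exact Hup.
Qed.

(* A cocone on the F-image factors through F p: first on the left summand,
   then on the pairs, one coordinate at a time via function spaces. *)
Lemma F_wide_pushout_descend (Q : Type) (q : F X -> Q) (d : forall i, F (Y i) -> Q) :
  set_cocone (fun i => Fmap (e i)) Q q d ->
  exists u : F P -> Q, forall w, u (Fmap p w) = q w.
Proof.
  intro Hd.
  assert (Hpair : forall i a a' b b', e i a = e i a' -> e i b = e i b' ->
                    q (inr (a, b)) = q (inr (a', b'))).
  { intros i a a' b b' Ea Eb.
    rewrite <- (Hd i (inr (a, b))), <- (Hd i (inr (a', b'))); simpl; rewrite Ea, Eb; reflexivity. }
  destruct (wide_pushout_descend Q (fun x => q (inl x))) as [u1 Hu1].
  { intros i a a' E; rewrite <- (Hd i (inl a)), <- (Hd i (inl a')); simpl; rewrite E; reflexivity. }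
  destruct (wide_pushout_descend (X -> Q) (fun a b => q (inr (a, b)))) as [U1 HU1].
  { intros i a a' E; apply functional_extensionality; intro b; apply (Hpair i); auto. }
  destruct (wide_pushout_descend (P -> Q) (fun b z => U1 z b)) as [U2 HU2].
  { intros i b b' E; apply functional_extensionality; intro z.
    destruct (wide_pushout_leg_surjective z) as [a <-]; rewrite !HU1; apply (Hpair i); auto. }
  exists (fun w => match w with inl z => u1 z | inr (z1, z2) => U2 z2 z1 end).
  intros [x | [a b]]; simpl; [apply Hu1 |]; rewrite HU2, HU1; reflexivity.
Qed.

Lemma F_preserves_wide_pushout :
  set_wide_pushout (fun i => Fmap (e i)) (F P) (Fmap p) (fun i => Fmap (c i)).
Proof.
  assert (Hc := proj1 pushout).
  assert (HFc : set_cocone (fun i => Fmap (e i)) (F P) (Fmap p) (fun i => Fmap (c i))).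
  { intros i w; simpl; rewrite Fmap_comp; apply Fmap_ext, Hc. }
  split; [exact HFc |].
  intros Q q d Hd.
  destruct (F_wide_pushout_descend Q q d Hd) as [u Hu].
  exists u; split; [exact Hu | split].
  - intros i w; destruct (Fmap_surj _ (e_surj i) w) as [w0 <-].
    rewrite HFc, Hu; symmetry; apply Hd.
  - intros u' Hu' _ z.
    destruct (Fmap_surj _ wide_pushout_leg_surjective z) as [w <-].
    rewrite Hu', Hu; reflexivity.
Qed.

End WidePushoutOfSurjections.

Lemma hom_eq {D E : dialg} (h : hom D E) (u : F (car D)) :
  str E (Fmap (hfun h) u) = Bmap (hfun h) (str D u).
Proof. exact (proj2_sig h u). Qed.

Lemma descend_hom {D E Q : dialg} (e : hom D E) (He : Surjective (hfun e)) (g : hom D Q) :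
  (forall x y, hfun e x = hfun e y -> hfun g x = hfun g y) ->
  {k : hom E Q | forall x, hfun k (hfun e x) = hfun g x}.
Proof.
  intro Hfib.
  pose (k := fun y => hfun g (preimage (hfun e) He y)).
  assert (Hk : forall x, k (hfun e x) = hfun g x) by (intro x; apply Hfib, preimage_spec).
  assert (Hhom : is_hom E Q k).
  { intro w; destruct (Fmap_surj _ He w) as [u <-].
    rewrite Fmap_comp, (Fmap_ext _ (hfun g) u Hk), !hom_eq, Bmap_comp.
    apply Bmap_ext_on; intros x _; symmetry; apply Hk. }
  exact (exist _ (exist _ k Hhom) Hk).
Qed.

Section Quotient.
Variables (X : Type) (R : X -> X -> Prop).

Definition quot : Type := {S : X -> Prop | exists x, S = R x}.
Definition cls (x : X) : quot := exist _ (R x) (ex_intro _ x eq_refl).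

Lemma cls_surj : Surjective cls.
Proof. intros [S [x ->]]; exists x; apply subset_eq_compat; reflexivity. Qed.

Hypotheses (R_refl : forall x, R x x) (R_sym : forall x y, R x y -> R y x)
  (R_trans : forall x y z, R x y -> R y z -> R x z).

Lemma cls_eq (x y : X) : cls x = cls y <-> R x y.
Proof.
  split.
  - intro E; assert (Hclass : R x = R y) by (injection E; auto).
    rewrite Hclass; apply R_refl.
  - intro Hxy; apply subset_eq_compat, pred_ext; intro z; split; eauto.
Qed.

Lemma Fmap_cls_eq (u v : F X) : Fmap cls u = Fmap cls v -> Flift R u v.
Proof.
  destruct u as [x | [a b]], v as [y | [a' b']]; simpl; intro E; try discriminate;
    [| split]; apply cls_eq; congruence.
Qed.

End Quotient.

Section DialgebraQuotient.
Variables (D : dialg) (R : car D -> car D -> Prop).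

Definition quot_dialg : dialg :=
  Dialg (quot (car D) R)
    (fun w t => exists u, Fmap (cls _ R) u = w /\ Bmap (cls _ R) (str D u) t).

Definition compatible : Prop :=
  forall u v, Fmap (cls _ R) u = Fmap (cls _ R) v ->
    Bmap (cls _ R) (str D u) = Bmap (cls _ R) (str D v).

Lemma cls_is_hom : compatible -> is_hom D quot_dialg (cls _ R).
Proof.
  intros Hcomp u; apply pred_ext; intro t; simpl; split.
  - intros [v [E Ht]]; rewrite (Hcomp v u E) in Ht; exact Ht.
  - intro Ht; exists u; auto.
Qed.

Definition cls_hom (Hcomp : compatible) : hom D quot_dialg :=
  exist _ (cls _ R) (cls_is_hom Hcomp).

End DialgebraQuotient.

(* Claim 3: the quotient by the kernel of h, followed by the induced map. *)
Lemma image_factorisation (D E : dialg) (h : hom D E) :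
  exists (M : dialg) (e : hom D M) (m : hom M E),
    Surjective (hfun e) /\ Injective (hfun m) /\ (forall x, hfun m (hfun e x) = hfun h x).
Proof.
  pose (R := fun x y => hfun h x = hfun h y).
  assert (Hcls : forall x y, cls _ R x = cls _ R y <-> R x y)
    by (apply cls_eq; unfold R; congruence).
  assert (Hcomp : compatible D R).
  { intros u v Euv.
    assert (EF : Fmap (hfun h) u = Fmap (hfun h) v)
      by (apply Fmap_eq_of_Flift, (Fmap_cls_eq _ R); unfold R; try congruence; exact Euv).
    apply (Bmap_fibres (hfun h)); [intros x y Exy; apply Hcls, Exy |].
    rewrite <- !hom_eq, EF; reflexivity. }
  pose (e := cls_hom D R Hcomp).
  destruct (descend_hom e (cls_surj _ R) h (fun x y Exy => proj1 (Hcls x y) Exy)) as [m Hm].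
  exists (quot_dialg D R), e, m; split; [apply cls_surj | split; [| exact Hm]].
  intros a b Eab.
  destruct (cls_surj _ R a) as [x <-], (cls_surj _ R b) as [y <-].
  apply Hcls; unfold R; rewrite <- !Hm; exact Eab.
Qed.

Lemma factorisation_comparison {D E M M' : dialg} (e : hom D M) (m : hom M E)
    (e' : hom D M') (m' : hom M' E) :
  Surjective (hfun e) -> Injective (hfun m') ->
  (forall x, hfun m' (hfun e' x) = hfun m (hfun e x)) ->
  exists i : hom M M',
    (forall x, hfun i (hfun e x) = hfun e' x) /\ (forall y, hfun m' (hfun i y) = hfun m y).
Proof.
  intros He Hm' Hcomm.
  destruct (descend_hom e He e') as [i Hi].
  { intros x y Exy; apply Hm'; rewrite !Hcomm, Exy; reflexivity. }
  exists i; split; [exact Hi |].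
  intro y; destruct (He y) as [x <-]; rewrite Hi; apply Hcomm.
Qed.

(* Claim 4: comparison maps in both directions are mutually inverse. *)
Lemma factorisation_unique (D E : dialg) (h : hom D E)
    (M : dialg) (e : hom D M) (m : hom M E) (M' : dialg) (e' : hom D M') (m' : hom M' E) :
  Surjective (hfun e) -> Injective (hfun m) -> (forall x, hfun m (hfun e x) = hfun h x) ->
  Surjective (hfun e') -> Injective (hfun m') -> (forall x, hfun m' (hfun e' x) = hfun h x) ->
  exists i : hom M M',
    dialg_iso i /\ (forall x, hfun i (hfun e x) = hfun e' x) /\
    (forall y, hfun m' (hfun i y) = hfun m y).
Proof.
  intros He Hm Hh He' Hm' Hh'.
  destruct (factorisation_comparison e m e' m' He Hm') as [i [Hie Him]].
  { intro x; rewrite Hh, Hh'; reflexivity. }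
  destruct (factorisation_comparison e' m' e m He' Hm) as [j [Hje _]].
  { intro x; rewrite Hh, Hh'; reflexivity. }
  exists i; split; [exists j; split | split; assumption].
  - intro y; destruct (He y) as [x <-]; rewrite Hie, Hje; reflexivity.
  - intro y; destruct (He' y) as [x <-]; rewrite Hje, Hie; reflexivity.
Qed.

Section Gluing.
Variables (E : dialg) (T : Type).

Definition glue_str (u v : car E -> T) (z : F T) : B T :=
  fun t => (exists w, z = Fmap u w /\ Bmap u (str E w) t) \/
           (exists w, z = Fmap v w /\ Bmap v (str E w) t).

(* The gluing is symmetric, so one lemma serves both maps. *)
Lemma glue_str_comm (u v : car E -> T) : glue_str u v = glue_str v u.
Proof.
  apply functional_extensionality; intro z; apply pred_ext; intro t; unfold glue_str; tauto.
Qed.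

Lemma glue_hom_left (u v : car E -> T) :
  Injective u ->
  (forall w w', Fmap v w' = Fmap u w -> w' = w /\ forall t, str E w t -> v t = u t) ->
  is_hom E (Dialg T (glue_str u v)) u.
Proof.
  intros Hu Hclash w; apply pred_ext; intro t; simpl; split.
  - intros [[w' [Ew Ht]] | [w' [Ew Ht]]].
    + apply (Fmap_inj u Hu) in Ew; subst; exact Ht.
    + destruct (Hclash w w' (eq_sym Ew)) as [-> Hagree].
      rewrite (Bmap_ext_on v u) in Ht; [exact Ht | exact Hagree].
  - intro Ht; left; exists w; auto.
Qed.

End Gluing.

(* Epimorphisms of dialgebras are surjective: inl and the map that sends the
   image of e to the left copy and the rest to the right copy are both
   homomorphisms E -> E + E for the glued structure, and they agree on the
   image of e. *)
Lemma dialg_epi_surjective (D E : dialg) (e : hom D E) : dialg_epi e -> Surjective (hfun e).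
Proof.
  intro He.
  pose (Im := fun y => exists x, hfun e x = y).
  pose (u := @inl (car E) (car E)).
  pose (v := fun y => if excluded_middle_informative (Im y) then u y else inr y).
  assert (Hv_Im : forall y, Im y -> v y = u y)
    by (intros y Hy; unfold v; destruct (excluded_middle_informative _); tauto).
  assert (Hv_left : forall y y', v y = u y' -> y = y' /\ Im y).
  { intros y y'; unfold v; destruct (excluded_middle_informative _);
      intro Ey; try discriminate; injection Ey; auto. }
  assert (Hv_inj : Injective v).
  { intros a b; unfold v; do 2 destruct (excluded_middle_informative _);
      intro Eab; try discriminate; injection Eab; auto. }
  assert (Hclosed : forall w0 t, str E (Fmap (hfun e) w0) t -> Im t).
  { intros w0 t Ht; rewrite hom_eq in Ht; destruct Ht as [x [_ Hx]]; exists x; exact Hx. }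
  assert (Hclash : forall w w', Fmap v w' = Fmap u w -> w' = w /\ exists w0, Fmap (hfun e) w0 = w).
  { intros [y | [y1 y2]] [y' | [y1' y2']]; simpl; intro Ew; try discriminate.
    - destruct (Hv_left y' y) as [-> [x <-]]; [congruence |].
      split; [reflexivity | exists (inl x); reflexivity].
    - destruct (Hv_left y1' y1) as [-> [x1 <-]]; [congruence |].
      destruct (Hv_left y2' y2) as [-> [x2 <-]]; [congruence |].
      split; [reflexivity | exists (inr (x1, x2)); reflexivity]. }
  pose (Z := Dialg (car E + car E) (glue_str E _ u v)).
  assert (Hu : is_hom E Z u).
  { apply glue_hom_left; [intros a b Eab; injection Eab; auto |].
    intros w w' Ew; destruct (Hclash w w' Ew) as [-> [w0 <-]].
    split; [reflexivity | intros t Ht; apply Hv_Im, (Hclosed w0), Ht]. }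
  assert (Hv : is_hom E Z v).
  { unfold Z; rewrite glue_str_comm; apply glue_hom_left; [exact Hv_inj |].
    intros w w' Ew; destruct (Hclash w' w (eq_sym Ew)) as [-> [w0 <-]].
    split; [reflexivity | intros t Ht; symmetry; apply Hv_Im, (Hclosed w0), Ht]. }
  intro y.
  assert (Huv : u y = v y).
  { apply (He Z (exist _ u Hu) (exist _ v Hv)); intro x; symmetry; apply Hv_Im; exists x; reflexivity. }
  unfold v in Huv; destruct (excluded_middle_informative (Im y)) as [Hy | _]; [exact Hy | discriminate].
Qed.

Inductive gen_equiv {I X : Type} {Y : I -> Type} (f : forall i, X -> Y i) : X -> X -> Prop :=
| gen_kernel : forall i x y, f i x = f i y -> gen_equiv f x y
| gen_refl : forall x, gen_equiv f x x
| gen_sym : forall x y, gen_equiv f x y -> gen_equiv f y x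
| gen_trans : forall x y z, gen_equiv f x y -> gen_equiv f y z -> gen_equiv f x z.

Lemma gen_equiv_kernel {I X T : Type} {Y : I -> Type} (f : forall i, X -> Y i) (G : X -> T) :
  (forall i x y, f i x = f i y -> G x = G y) -> forall x y, gen_equiv f x y -> G x = G y.
Proof. intros Hker x y Hxy; induction Hxy; eauto; congruence. Qed.

Lemma Flift_gen_equiv_kernel {I X T : Type} {Y : I -> Type} (f : forall i, X -> Y i)
    (G : F X -> T) :
  (forall i w w', Fmap (f i) w = Fmap (f i) w' -> G w = G w') ->
  forall w w', Flift (gen_equiv f) w w' -> G w = G w'.
Proof.
  intros Hker [x | [a b]] [x' | [a' b']]; simpl; try tauto.
  - apply (gen_equiv_kernel f (fun x => G (inl x))).
    intros i y y' Ey; apply (Hker i); simpl; rewrite Ey; reflexivity.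
  - intros [Ha Hb]; transitivity (G (inr (a', b))).
    + apply (gen_equiv_kernel f (fun a => G (inr (a, b)))); [| exact Ha].
      intros i y y' Ey; apply (Hker i); simpl; rewrite Ey; reflexivity.
    + apply (gen_equiv_kernel f (fun b => G (inr (a', b)))); [| exact Hb].
      intros i y y' Ey; apply (Hker i); simpl; rewrite Ey; reflexivity.
Qed.

Section BisimilarityQuotient.
Variable D : dialg.

Definition quotient_map (C : quotient_class D) : hom D (epi_tgt (quotient_rep D C)) :=
  epi_map (quotient_rep D C).

Definition quotient_family (C : quotient_class D) : car D -> car (epi_tgt (quotient_rep D C)) :=
  hfun (quotient_map C).

Lemma quotient_map_surjective (C : quotient_class D) : Surjective (hfun (quotient_map C)).
Proof. apply dialg_epi_surjective, (proj2_sig (projT2 (quotient_rep D C))). Qed.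

Definition bisim : car D -> car D -> Prop := gen_equiv quotient_family.

Lemma cls_bisim_eq (x y : car D) : cls _ bisim x = cls _ bisim y <-> bisim x y.
Proof. apply cls_eq; [apply gen_refl | apply gen_sym | apply gen_trans]. Qed.

(* Each quotient map is compatible with the structure modulo bisimilarity,
   hence so is bisimilarity itself. *)
Lemma bisim_compatible : compatible D bisim.
Proof.
  intros u v Euv.
  apply (Flift_gen_equiv_kernel quotient_family (fun w => Bmap (cls _ bisim) (str D w))).
  - intros C w w' Ew; unfold quotient_family in Ew.
    apply (Bmap_fibres (hfun (quotient_map C))).
    + intros x y Exy; apply cls_bisim_eq, (gen_kernel quotient_family C), Exy.
    + rewrite <- !hom_eq, Ew; reflexivity.
  - apply (Fmap_cls_eq _ bisim); [apply gen_refl | apply gen_sym | apply gen_trans | exact Euv].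
Qed.

Definition bisim_proj : hom D (quot_dialg D bisim) := cls_hom D bisim bisim_compatible.

Lemma bisim_proj_fibres (C : quotient_class D) (x y : car D) :
  hfun (quotient_map C) x = hfun (quotient_map C) y -> hfun bisim_proj x = hfun bisim_proj y.
Proof. intro Exy; apply cls_bisim_eq, (gen_kernel quotient_family C), Exy. Qed.

Definition bisim_leg (C : quotient_class D) : hom (epi_tgt (quotient_rep D C)) (quot_dialg D bisim) :=
  proj1_sig (descend_hom (quotient_map C) (quotient_map_surjective C) bisim_proj
               (bisim_proj_fibres C)).

Lemma bisim_leg_spec (C : quotient_class D) (x : car D) :
  hfun (bisim_leg C) (hfun (quotient_map C) x) = hfun bisim_proj x.
Proof. exact (proj2_sig (descend_hom _ _ _ (bisim_proj_fibres C)) x). Qed.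

(* Claim 5: any cocone is constant on bisimilarity, so it descends along the
   (surjective) projection. *)
Lemma bisim_quotient_universal : is_bisim_quotient D (quot_dialg D bisim) bisim_proj bisim_leg.
Proof.
  split; [exact bisim_leg_spec |].
  intros Q q d Hd.
  assert (Hq : forall x y, hfun bisim_proj x = hfun bisim_proj y -> hfun q x = hfun q y).
  { intros x y Exy; apply (gen_equiv_kernel quotient_family (hfun q)); [| apply cls_bisim_eq, Exy].
    intros C x' y' E'; rewrite <- (Hd C x'), <- (Hd C y'); unfold quotient_family, quotient_map in E'.
    simpl; rewrite E'; reflexivity. }
  destruct (descend_hom bisim_proj (cls_surj _ bisim) q Hq) as [u Hu].
  exists u; split; [exact Hu | split].
  - intros C y; destruct (quotient_map_surjective C y) as [x <-].
    rewrite bisim_leg_spec, Hu; symmetry; apply Hd.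
  - intros u' Hu' _ z; destruct (cls_surj _ bisim z) as [x <-].
    exact (eq_trans (Hu' x) (eq_sym (Hu x))).
Qed.

End BisimilarityQuotient.

Theorem proposition4 :
  (* F and B preserve monomorphisms with empty domain *)
  (forall (X Y : Type) (m : X -> Y),
     (X -> False) -> set_mono m -> set_mono (Fmap m) /\ set_mono (Bmap m)) /\
  (* F preserves (small) wide pushouts of epimorphisms *)
  (forall (I X : Type) (Y : I -> Type) (e : forall i, X -> Y i),
     (forall i, set_epi (e i)) ->
     forall (P : Type) (p : X -> P) (c : forall i, Y i -> P),
       set_wide_pushout e P p c ->
       set_wide_pushout (fun i => Fmap (e i)) (F P) (Fmap p) (fun i => Fmap (c i))) /\
  (* existence of (surjective, injective) factorisations in Dialg(F,B) *)
  (forall (D E : dialg) (h : hom D E),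
     exists (M : dialg) (e : hom D M) (m : hom M E),
       (forall y, exists x, hfun e x = y) /\
       (forall a b, hfun m a = hfun m b -> a = b) /\
       (forall x, hfun m (hfun e x) = hfun h x)) /\
  (* uniqueness of such factorisations up to isomorphism *)
  (forall (D E : dialg) (h : hom D E)
          (M : dialg) (e : hom D M) (m : hom M E)
          (M' : dialg) (e' : hom D M') (m' : hom M' E),
     (forall y, exists x, hfun e x = y) ->
     (forall a b, hfun m a = hfun m b -> a = b) ->
     (forall x, hfun m (hfun e x) = hfun h x) ->
     (forall y, exists x, hfun e' x = y) ->
     (forall a b, hfun m' a = hfun m' b -> a = b) ->
     (forall x, hfun m' (hfun e' x) = hfun h x) ->
     exists i : hom M M',
       dialg_iso i /\
       (forall x, hfun i (hfun e x) = hfun e' x) /\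
       (forall y, hfun m' (hfun i y) = hfun m y)) /\
  (* every dialgebra has a bisimilarity quotient *)
  (forall D : dialg, has_bisim_quotient D).
Proof.
  split; [exact mono_empty_domain_preserved |].
  split.
  { intros I X Y e He P p c Hpushout.
    apply (F_preserves_wide_pushout I X Y e P p c); [| exact Hpushout].
    intro i; apply set_epi_surjective, He. }
  split; [exact image_factorisation |].
  split; [exact factorisation_unique |].
  intro D; exists (quot_dialg D (bisim D)), (bisim_proj D), (bisim_leg D).
  apply bisim_quotient_universal.
Qed.
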